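(* Let $f:[0,1]\to\mathbb{R}$ be continuous. The following are equivalent: (1) $f$ is completely non-Hölder; (2) for every non-constant polynomial $P\in\mathbb{R}[t]$, there is no point $x_0\in[0,1]$ at which $P\circ f$ has a one-sided (left or right) derivative equal to $0$; (3) for every function $F$ that is real-analytic and non-constant on an open interval containing $f([0,1])$, the function $F\circ f$ is completely non-Hölder.
   Context: For $\alpha>0$, a function $g:[0,1]\to\mathbb{R}$ is called $\alpha$-Hölder at $x_0$ from the right if $\limsup_{y\searrow x_0}\frac{|g(y)-g(x_0)|}{|y-x_0|^\alpha}<\infty$, and $\alpha$-Hölder at $x_0$ from the left if $\limsup_{y\nearrow x_0}\frac{|g(y)-g(x_0)|}{|y-x_0|^\alpha}<\infty$. The function $g$ is called completely non-Hölder if there is no $x_0\in[0,1]$ and no $\alpha>0$ such that $g$ is $\alpha$-Hölder at $x_0$ from the left or from the right. *)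

From HB Require Import structures.
From mathcomp Require Import all_boot all_order all_algebra.
From mathcomp Require Import all_classical all_reals all_analysis.
Set Implicit Arguments. Unset Strict Implicit. Unset Printing Implicit Defensive.
Import Order.TTheory GRing.Theory Num.Theory.
Import numFieldNormedType.Exports.
Local Open Scope classical_set_scope.
Local Open Scope ring_scope.

Section Defs.
Variable R : realType.

Definition holder_right (g : R -> R) (x0 alpha : R) : Prop :=
  (0 <= x0 < 1) /\
  (exists M : R, \forall y \near (at_right x0),
    (`|g y - g x0| / powR (`|y - x0|) alpha <= M)).

Definition holder_left (g : R -> R) (x0 alpha : R) : Prop :=
  (0 < x0 <= 1) /\
  (exists M : R, \forall y \near (at_left x0),
    (`|g y - g x0| / powR (`|y - x0|) alpha <= M)).

Definition completely_non_holder (g : R -> R) : Prop :=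
  forall x0 alpha : R, x0 \in `[0, 1] -> 0 < alpha ->
    ~ holder_right g x0 alpha /\ ~ holder_left g x0 alpha.

Definition right_deriv_zero (h : R -> R) (x0 : R) : Prop :=
  (0 <= x0 < 1) /\ (fun y => (h y - h x0) / (y - x0)) @ at_right x0 --> 0.

Definition left_deriv_zero (h : R -> R) (x0 : R) : Prop :=
  (0 < x0 <= 1) /\ (fun y => (h y - h x0) / (y - x0)) @ at_left x0 --> 0.

Definition analytic_at (F : R -> R) (a : R) : Prop :=
  exists (r : R) (c : nat -> R), 0 < r /\
    forall x, `|x - a| < r ->
      (fun n : nat => \sum_(0 <= k < n) c k * (x - a) ^+ k) @ \oo --> F x.

Definition in_open_interval (a b : \bar R) (x : R) : Prop :=
  (a < x%:E)%E /\ (x%:E < b)%E.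

End Defs.

From HB Require Import structures.
From mathcomp Require Import all_boot all_order all_algebra.
From mathcomp Require Import all_classical all_reals all_analysis.
From mathcomp Require Import lra.
Import Order.TTheory GRing.Theory Num.Theory.
Import numFieldNormedType.Exports.
Local Open Scope classical_set_scope.
Local Open Scope ring_scope.

(* An analytic function F on an interval is either constant or, at every point s,
   of finite order: |F t - F s| is comparable to |t - s|^k for some k >= 1. This is
   read off the power series at s, unless all its non-constant coefficients vanish;
   in that case F is locally constant at s, and a supremum argument spreads the
   constancy along the whole interval, since at a point of finite order F cannot be
   constant on one side. Composing f with such an F at most divides Hölder exponents
   by k, which gives (1) => (3), and (1) => (2) because a vanishing one-sided
   derivative makes P o f 1-Hölder on that side. Conversely, if f is alpha-Hölder
   at x0 on one side and n * alpha >= 2, then P = (X - f x0)^n makes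
   |P (f y) - P (f x0)| = O(|y - x0|^2), so P o f has one-sided derivative 0 at x0;
   (3) => (1) is the case F = id. *)

Section CompletelyNonHolder.
Context {R : realType}.

Definition locally_constant_at (F : R -> R) (s : R) :=
  exists2 r : R, 0 < r & forall x, `|x - s| < r -> F x = F s.

Definition finite_order_at (F : R -> R) (s : R) :=
  exists (k : nat) (d m M : R), [/\ (0 < k)%N, 0 < d, 0 < m &
    forall x, `|x - s| < d -> m * `|x - s| ^+ k <= `|F x - F s| <= M * `|x - s| ^+ k].

Lemma sumr_geom_le (q : R) (k n : nat) : 0 <= q -> 2 * q <= 1 ->
  \sum_(k <= j < k + n) q ^+ j <= 2 * q ^+ k - 2 * q ^+ (k + n).
Proof.
move=> q0 q_le; elim: n => [|n IH]; first by rewrite addn0 big_geq // subrr.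
rewrite addnS big_nat_recr /=; last exact: leq_addr.
rewrite (le_trans (lerD IH (lexx _))) // exprS.
have := exprn_ge0 (k + n) q0; nra.
Qed.

Lemma leading_term_finite_order [G : R -> R] [s a K rho : R] [k : nat] :
  (0 < k)%N -> a != 0 -> 0 < K -> 0 < rho ->
  (forall x, `|x - s| <= rho ->
     `|G x - G s - a * (x - s) ^+ k| <= K * `|x - s| ^+ k.+1) ->
  finite_order_at G s.
Proof.
move=> k0 a0 K0 rho0 est.
have na : 0 < `|a| by rewrite normr_gt0.
exists k, (Num.min rho (`|a| / (2 * K))), (`|a| / 2), (3 * `|a| / 2); split => //.
- by rewrite lt_min rho0 divr_gt0 //; lra.
- by rewrite divr_gt0.
move=> x; rewrite lt_min => /andP[/ltW xrho]; set z := `|x - s| => za.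
have Kz : K * z <= `|a| / 2.
  by rewrite ler_pdivlMr //; move: za; rewrite ltr_pdivlMr ?mulr_gt0 //; lra.
have err : K * z ^+ k.+1 <= `|a| / 2 * z ^+ k.
  by rewrite exprS mulrA (ler_wpM2r (exprn_ge0 _ (normr_ge0 _))).
have := le_trans (ler_dist_dist (G x - G s) (a * (x - s) ^+ k)) (le_trans (est x xrho) err).
rewrite ler_distl normrM normrX -/z.
by move=> /andP[lo hi]; apply/andP; split; lra.
Qed.

Section PowerSeries.
Context {c : nat -> R} {r : R} {G : R -> R} {t0 : R}.
Hypothesis r_gt0 : 0 < r.
Hypothesis G_series : forall x : R, `|x - t0| < r ->
  (fun n : nat => \sum_(0 <= k < n) c k * (x - t0) ^+ k) @ \oo --> G x.

Lemma power_series_eq_coef0 [x : R] : `|x - t0| < r ->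
  (forall j, (0 < j)%N -> c j * (x - t0) ^+ j = 0) -> G x = c 0%N.
Proof.
move=> xr cj0; have lim0 : (fun n : nat => \sum_(0 <= k < n) c k * (x - t0) ^+ k) @ \oo --> c 0%N.
  apply: cvg_near_cst.
  exists 1%N => // n /= n_gt0; rewrite big_ltn // expr0 mulr1 big_nat_cond big1 ?addr0 //.
  by move=> j /andP[/andP[j0 _] _]; rewrite cj0.
exact: cvg_unique _ (G_series x xr) lim0.
Qed.

Lemma power_series_center : G t0 = c 0%N.
Proof.
apply: power_series_eq_coef0 => [|j j0]; first by rewrite subrr normr0.
by rewrite subrr expr0n gtn_eqF // mulr0.
Qed.

Lemma power_series_coef_bounded :
  exists2 B, 0 < B & forall j, `|c j| * (r / 2) ^+ j <= B.
Proof.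
have rho0 : 0 < r / 2 by rewrite divr_gt0.
have rho_r : `|(t0 + r / 2) - t0| < r by rewrite (addrC t0) addrK gtr0_norm //; lra.
have [M0 [_ M0_bnd]] := cvg_seq_bounded (cvgP _ (G_series _ rho_r)).
have psum_bnd n : `|\sum_(0 <= j < n) c j * (t0 + r / 2 - t0) ^+ j| <= `|M0| + 1.
  by apply: (M0_bnd (`|M0| + 1)) => //; have := ler_norm M0; lra.
exists (2 * (`|M0| + 1)); first by have := normr_ge0 M0; lra.
move=> j; have := psum_bnd j.+1; have := psum_bnd j.
rewrite big_nat_recr //= (addrC t0) addrK.
set s := \sum_(0 <= i < j) _ => h1 h2.
have := ler_normB (s + c j * (r / 2) ^+ j) s; rewrite addrC addKr.
rewrite normrM normrX (gtr0_norm rho0); lra.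
Qed.

Lemma power_series_leading_term [k : nat] : (0 < k)%N ->
  (forall j, (0 < j < k)%N -> c j = 0) ->
  exists2 K, 0 < K & forall x, `|x - t0| <= r / 4 ->
    `|G x - G t0 - c k * (x - t0) ^+ k| <= K * `|x - t0| ^+ k.+1.
Proof.
move=> k0 ck0.
have [B B0 cB] := power_series_coef_bounded.
have rho0 : 0 < r / 2 by rewrite divr_gt0.
exists (2 * B / (r / 2) ^+ k.+1); first by rewrite divr_gt0 ?exprn_gt0 //; lra.
move=> x hx; set h := x - t0.
have hr : `|h| < r by have := normr_ge0 h; lra.
pose q := `|h| / (r / 2).
have q0 : 0 <= q by rewrite divr_ge0 // ltW.
have q_le : 2 * q <= 1 by rewrite mulrA ler_pdivrMr // mul1r; lra.
have psum_split n : (k < n)%N -> \sum_(0 <= j < n) c j * h ^+ j =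
    c 0%N + c k * h ^+ k + \sum_(k.+1 <= j < n) c j * h ^+ j.
  move=> kn; rewrite (@big_cat_nat _ _ _ k.+1) //= big_nat_recr //= big_ltn //.
  rewrite expr0 mulr1 [X in c 0%N + X + _ + _ = _]big_nat_cond big1 ?addr0 //.
  by move=> j /andP[/andP[j0 jk] _]; rewrite ck0 ?j0 // mul0r.
(* Since [|c j| * (r / 2) ^+ j <= B], the tail is dominated by a geometric series
   of ratio [q <= 1 / 2]. *)
have tail_le n : (k < n)%N ->
    `|\sum_(k.+1 <= j < n) c j * h ^+ j| <= 2 * B * q ^+ k.+1.
  move=> kn; apply: (le_trans (ler_norm_sum _ _ _)).
  apply: (@le_trans _ _ (\sum_(k.+1 <= j < n) B * q ^+ j)).
    apply: ler_sum => j _; rewrite normrM normrX.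
    have -> : `|c j| * `|h| ^+ j = (`|c j| * (r / 2) ^+ j) * q ^+ j.
      by rewrite /q (expr_div_n `|h|) -mulrA (mulrC ((r / 2) ^+ j)) divfK // expf_neq0 // gt_eqF.
    by apply: ler_wpM2r; [exact: exprn_ge0 | exact: cB].
  rewrite -mulr_sumr [2 * B]mulrC -mulrA; apply: ler_wpM2l; first lra.
  have := sumr_geom_le q k.+1 (n - k.+1) q0 q_le; rewrite subnKC //.
  have := exprn_ge0 n q0; lra.
rewrite power_series_center -addrA -opprD.
apply: (ler_cvg_to (cvg_norm (cvgB (G_series _ hr) (cvg_cst (c 0%N + c k * h ^+ k))))
  (cvg_cst _)).
exists k.+1 => // n /= kn.
change (`|\sum_(0 <= j < n) c j * h ^+ j - (c 0%N + c k * h ^+ k)|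
  <= 2 * B / (r / 2) ^+ k.+1 * `|h| ^+ k.+1).
rewrite psum_split // (addrC (c 0%N + _)) addrK.
apply: (le_trans (tail_le n kn)).
by rewrite /q (expr_div_n `|h|) mulrA mulrAC.
Qed.

Lemma power_series_dichotomy :
  (forall j, (0 < j)%N -> c j = 0) \/ finite_order_at G t0.
Proof.
have [|/existsNP[j /not_implyP[j0 /eqP cj]]] := pselect (forall j, (0 < j)%N -> c j = 0).
  by left.
right; have nz : exists j, (0 < j)%N && (c j != 0) by exists j; rewrite j0.
case: (ex_minnP nz) => k /andP[k0 ck] kmin.
have below_k i : (0 < i < k)%N -> c i = 0.
  move=> /andP[i0 ik]; apply/eqP; apply: contraTT ik => ci.
  by rewrite -leqNgt kmin // i0.
have [K K0 est] := power_series_leading_term k0 below_k.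
by apply: (leading_term_finite_order k0 ck K0 _ est); rewrite divr_gt0.
Qed.

End PowerSeries.

Lemma analytic_dichotomy [F s] :
  analytic_at F s -> locally_constant_at F s \/ finite_order_at F s.
Proof.
case=> r [c [r0 F_series]]; case: (power_series_dichotomy r0 F_series) => [c0|]; last by right.
left; exists r => // x xr.
rewrite (power_series_center r0 F_series) (power_series_eq_coef0 F_series xr) // => j j0.
by rewrite c0 // mul0r.
Qed.

Lemma poly_finite_order (P : {poly R}) s : (1 < size P)%N -> finite_order_at (horner P) s.
Proof.
move=> sP; pose Q := P \Po ('X + s%:P).
have sQ : size Q = size P by rewrite size_comp_poly2 // size_XaddC.
have P_series x : `|x - s| < 1 ->
    (fun n : nat => \sum_(0 <= k < n) Q`_k * (x - s) ^+ k) @ \oo --> P.[x].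
  move=> _; apply: cvg_near_cst; exists (size Q) => // n /= Qn.
  rewrite (@big_cat_nat _ _ _ (size Q)) //= [X in _ + X]big_nat_cond [X in _ + X]big1.
    by rewrite addr0 big_mkord -horner_coef horner_comp !hornerE subrK.
  by move=> i /andP[/andP[Qi _] _]; rewrite nth_default // mul0r.
case: (power_series_dichotomy ltr01 P_series) => // Q_const.
have Q0 : Q != 0 by rewrite -size_poly_eq0 sQ; case: (size P) sP.
move: (Q_const (size Q).-1); rewrite -lead_coefE => /(_ _)/eqP.
by rewrite lead_coef_eq0 (negbTE Q0) sQ; case: (size P) sP => [|[|]] // n _ /(_ isT).
Qed.

Lemma pow_squeeze_contra (k : nat) (m M D u : R) : (0 < k)%N -> 0 < m -> 0 < u ->
  ~ (forall e, 0 < e < u -> m * e ^+ k <= D <= M * e ^+ k).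
Proof.
move=> k0 m0 u0 squeeze.
have D0 : 0 < D.
  have hu : 0 < u / 2 < u by apply/andP; split; lra.
  have /andP[+ _] := squeeze _ hu.
  exact/lt_le_trans/mulr_gt0/exprn_gt0/divr_gt0.
pose e := Num.min (u / 2) (Num.min 1 (D / (`|M| + 1))).
have M1 : 0 < `|M| + 1 by have := normr_ge0 M; lra.
have e0 : 0 < e by rewrite !lt_min ltr01 !divr_gt0.
have eu : e <= u / 2 by rewrite ge_min lexx.
have e1 : e <= 1 by rewrite !ge_min lexx orbT.
have eD : e * (`|M| + 1) <= D by rewrite -ler_pdivlMr // !ge_min lexx !orbT.
have /andP[_ hi] : m * e ^+ k <= D <= M * e ^+ k.
  by apply: squeeze; rewrite e0 /=; lra.
have ek : M * e ^+ k <= `|M| * e.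
  apply: le_trans (ler_wpM2r (exprn_ge0 _ (ltW e0)) (ler_norm M)) _.
  apply: ler_wpM2l => //; rewrite -(prednK k0) exprS.
  by apply: ler_piMr; [exact: ltW | exact: exprn_ile1 (ltW e0) e1].
nra.
Qed.

Lemma finite_order_not_const_on_side [F p sg u C] :
  finite_order_at F p -> `|sg| = 1 -> 0 < u ->
  ~ (forall e, 0 < e <= u -> F (p - sg * e) = C).
Proof.
move=> [k [d [m [M [k0 d0 m0 bnd]]]]] sg1 u0 FC.
apply: (@pow_squeeze_contra k m M `|C - F p| (Num.min u d) k0 m0).
  by rewrite lt_min u0.
move=> e /andP[e0]; rewrite lt_min => /andP[eu ed].
have Fe : F (p - sg * e) = C by apply: FC; rewrite e0 ltW.
have pe : `|p - sg * e - p| = e.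
  by rewrite addrAC subrr add0r normrN normrM sg1 mul1r gtr0_norm.
by move: (bnd (p - sg * e)); rewrite Fe pe; apply.
Qed.

Lemma real_induction (L : R) (P : R -> Prop) : 0 <= L ->
  (forall s, 0 <= s <= L -> (forall w, 0 <= w < s -> P w) ->
     exists2 r, 0 < r & forall w, 0 <= w < s + r -> w <= L -> P w) ->
  forall w, 0 <= w <= L -> P w.
Proof.
move=> L0 step.
pose A := [set s : R | 0 <= s <= L /\ forall w, 0 <= w < s -> P w].
have A0 : A 0 by split=> [|w /andP[w0 /(le_lt_trans w0)]]; rewrite ?lexx ?ltxx.
have ubL : ubound A L by move=> s [/andP[_ ?] _].
have supA : has_sup A by split; [exists 0 | exists L].
set u := sup A.
have u0 : 0 <= u := ub_le_sup (ex_intro _ L ubL) A0.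
have uL : u <= L := ge_sup (ex_intro _ 0 A0) ubL.
have below w : 0 <= w < u -> P w.
  move=> /andP[w0 wu].
  have [s [_ As] ws] := sup_adherent (ltac:(by rewrite subr_gt0) : 0 < u - w) supA.
  by apply: As; rewrite w0 /=; move: ws; rewrite -/u opprB addrCA subrr addr0.
have [r r0 Pr] := step u (ltac:(by rewrite u0 uL)) below.
have uLe : u = L.
  apply/eqP; rewrite eq_le uL leNgt; apply/negP => uLt.
  have As : A (Num.min L (u + r / 2)).
    split=> [|w /andP[w0]]; first by rewrite ge_min lexx andbT le_min L0 /=; lra.
    rewrite lt_min => /andP[wL wr]; apply: Pr; first by rewrite w0 /=; lra.
    exact: ltW.
  have := ub_le_sup (ex_intro _ L ubL) As; rewrite -/u.
  by rewrite ge_min leNgt uLt /= leNgt; apply/negP; lra.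
by move=> w /andP[w0 wL]; apply: Pr => //; rewrite w0 /=; lra.
Qed.

Lemma locally_constant_spread [F t0 sg L] : `|sg| = 1 -> 0 <= L ->
  (forall w, 0 <= w <= L ->
     locally_constant_at F (t0 + sg * w) \/ finite_order_at F (t0 + sg * w)) ->
  locally_constant_at F t0 -> F (t0 + sg * L) = F t0.
Proof.
move=> sg1 L0 dich [r0 r0_gt0 F_r0].
have dist w w' : `|t0 + sg * w - (t0 + sg * w')| = `|w - w'|.
  by rewrite opprD addrACA subrr add0r -mulrBr normrM sg1 mul1r.
apply: (@real_induction L (fun w => F (t0 + sg * w) = F t0) L0); last first.
  by rewrite L0 lexx.
move=> s /andP[s0 sL] below.
move: s0; rewrite le_eqVlt => /orP[/eqP s0|s_gt0].
  exists r0 => // w /andP[w0 wr] _; apply: F_r0.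
  move: (dist w 0); rewrite mulr0 addr0 subr0 => ->.
  by rewrite ger0_norm //; move: wr; rewrite -s0 add0r.
have F_side e : 0 < e <= s -> F (t0 + sg * s - sg * e) = F t0.
  by move=> /andP[e0 es]; rewrite -addrA -mulrBr; apply: below; lra.
case: (dich s) => [|[r r_gt0 F_r]|fo]; first by rewrite (ltW s_gt0) sL.
  have Fs : F (t0 + sg * s) = F t0.
    have m0 : 0 < Num.min s r by rewrite lt_min s_gt0.
    have ms : Num.min s r <= s by rewrite ge_min lexx.
    have mr : Num.min s r <= r by rewrite ge_min lexx orbT.
    rewrite -(F_side (Num.min s r / 2)); last by apply/andP; split; lra.
    symmetry; apply: F_r; rewrite addrAC subrr add0r normrN normrM sg1 mul1r.
    by rewrite gtr0_norm; lra.
  exists r => // w /andP[w0 wsr] _.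
  have [ws|sw] := ltP w s; first by apply: below; rewrite w0.
  by rewrite -Fs; apply: F_r; rewrite dist ger0_norm; lra.
by exfalso; apply: (finite_order_not_const_on_side fo sg1 s_gt0 F_side).
Qed.

Lemma in_open_interval_between [a b : \bar R] [x y w] :
  in_open_interval a b x -> in_open_interval a b y ->
  x <= w -> w <= y -> in_open_interval a b w.
Proof.
move=> [ax _] [_ yb] xw wy; split; first by apply: (lt_le_trans ax); rewrite lee_fin.
by apply: (le_lt_trans _ yb); rewrite lee_fin.
Qed.

Lemma analytic_nonconst_finite_order F (a b : \bar R) t0 :
  (forall x, in_open_interval a b x -> analytic_at F x) ->
  (exists x y, in_open_interval a b x /\ in_open_interval a b y /\ F x != F y) ->
  in_open_interval a b t0 -> finite_order_at F t0.
Proof.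
move=> F_an [x [y [Ix [Iy Fxy]]]] It0.
case: (analytic_dichotomy (F_an _ It0)) => // F_lc.
have spread sg L : `|sg| = 1 -> 0 <= L ->
    (forall w, 0 <= w <= L -> in_open_interval a b (t0 + sg * w)) ->
    F (t0 + sg * L) = F t0.
  move=> sg1 L0 I_seg; apply: locally_constant_spread sg1 L0 _ F_lc => w wL.
  exact/analytic_dichotomy/F_an/I_seg.
have F_const z : in_open_interval a b z -> F z = F t0.
  move=> Iz; have [tz|zt] := leP t0 z.
    have -> : z = t0 + 1 * (z - t0) by rewrite mul1r addrC subrK.
    apply: spread => [||w /andP[w0 wL]]; rewrite ?normr1 ?subr_ge0 //.
    by apply: (in_open_interval_between It0 Iz); lra.
  have -> : z = t0 + -1 * (t0 - z) by rewrite mulN1r opprB addrC subrK.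
  apply: spread => [||w /andP[w0 wL]]; rewrite ?normrN1 ?subr_ge0 ?ltW //.
  by apply: (in_open_interval_between Iz It0); lra.
by move/eqP: Fxy; rewrite (F_const x Ix) (F_const y Iy).
Qed.

(* [holder_right g x0 alpha] unfolds to [(0 <= x0 < 1) /\ holder_along x0^'+ g x0 alpha],
   and [holder_left] likewise with [x0^'-]. *)
Definition holder_along (Fl : set_system R) (g : R -> R) (x0 alpha : R) :=
  exists M : R, \forall y \near Fl, `|g y - g x0| / powR `|y - x0| alpha <= M.

Section HolderAlongFilter.
Context {Fl : set_system R} {Fl_proper : ProperFilter Fl}.

Lemma holder_along_comp [f G : R -> R] [x0 alpha : R] [k : nat] [d m : R] :
  (0 < k)%N -> 0 < d -> 0 < m ->
  (forall t, `|t - f x0| < d -> m * `|t - f x0| ^+ k <= `|G t - G (f x0)|) ->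
  f @ Fl --> f x0 -> (\forall y \near Fl, y != x0) ->
  holder_along Fl (G \o f) x0 alpha -> holder_along Fl f x0 (alpha / k%:R).
Proof.
move=> k0 d0 m0 lower f_cvg y_neq [M GfM].
move/cvgrPdist_lt: f_cvg => /(_ d d0) f_near.
exists (Num.max 1 (M / m)); near=> y.
have yx : y != x0 by near: y.
have hM : `|G (f y) - G (f x0)| / powR `|y - x0| alpha <= M by near: y.
have hd : `|f x0 - f y| < d by near: y.
set z := `|y - x0|; set A := `|f y - f x0|; set P := powR z (alpha / k%:R).
have P0 : 0 < P by rewrite powR_gt0 // normr_gt0 subr_eq0.
have Pk : P ^+ k = powR z alpha.
  by rewrite -powR_mulrn ?powR_ge0 // -powRrM mulfVK // pnatr_eq0 -lt0n.
have AkM : m * A ^+ k <= M * P ^+ k.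
  rewrite Pk; apply: (le_trans (lower _ _)); first by rewrite distrC.
  by rewrite -ler_pdivrMr // powR_gt0 // normr_gt0 subr_eq0.
have AP : (A / P) ^+ k <= M / m.
  by rewrite expr_div_n ler_pdivrMr ?exprn_gt0 // mulrAC ler_pdivlMr // mulrC.
have [AP1|AP1] := leP (A / P) 1; rewrite le_max ?AP1 //.
by apply/orP; right; apply: le_trans AP; apply: ler_eXnr => //; exact: ltW.
Unshelve. all: by end_near.
Qed.

Lemma deriv0_holder_along [h : R -> R] [x0 : R] : (\forall y \near Fl, y != x0) ->
  (fun y => (h y - h x0) / (y - x0)) @ Fl --> 0 -> holder_along Fl h x0 1.
Proof.
move=> y_neq /cvgrPdist_lt /(_ 1 ltr01) slope_lt1.
exists 1; near=> y.
have yx : y != x0 by near: y.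
have hy : `|0 - (h y - h x0) / (y - x0)| < 1 by near: y.
rewrite powRr1 // -normrV ?unitfE ?subr_eq0 // -normrM.
by rewrite sub0r normrN in hy; exact: ltW.
Unshelve. all: by end_near.
Qed.

Lemma holder_along_pow_deriv0 [g : R -> R] [x0 alpha : R] [n : nat] :
  0 < alpha -> 2 <= n%:R * alpha ->
  (forall e, 0 < e -> \forall y \near Fl, 0 < `|y - x0| < e) ->
  holder_along Fl g x0 alpha -> (fun y => (g y - g x0) ^+ n / (y - x0)) @ Fl --> 0.
Proof.
move=> a0 na near_x0 [M gM].
apply/cvgrPdist_lt => eps eps0.
pose C := `|M| ^+ n + 1.
have C0 : 0 < C by rewrite /C; have := exprn_ge0 n (normr_ge0 M); lra.
near=> y.
have /andP[z0 ze] : 0 < `|y - x0| < Num.min 1 (eps / C).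
  by near: y; apply: near_x0; rewrite lt_min ltr01 divr_gt0.
have hM : `|g y - g x0| / powR `|y - x0| alpha <= M by near: y.
set z := `|y - x0| in z0 ze hM *.
move: ze; rewrite lt_min => /andP[/ltW z1 zeC].
have hA : `|g y - g x0| <= `|M| * powR z alpha.
  by rewrite -ler_pdivrMr ?powR_gt0 //; apply: (le_trans hM); exact: ler_norm.
have hAn : `|g y - g x0| ^+ n <= `|M| ^+ n * z ^+ 2.
  apply: (le_trans (lerXn2r n _ _ hA)); rewrite ?nnegrE ?normr_ge0 ?mulr_ge0 ?powR_ge0 //.
  rewrite exprMn ler_wpM2l ?exprn_ge0 // -powR_mulrn ?powR_ge0 // -powRrM mulrC.
  by rewrite -(powR_mulrn 2 (ltW z0)) (ger_powR _ na) // z0 z1.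
rewrite sub0r normrN normrM normrV; last by rewrite unitfE -normr_eq0 -/z gt_eqF.
rewrite normrX ltr_pdivrMr // (le_lt_trans hAn) // expr2 mulrA ltr_pM2r //.
rewrite ltr_pdivlMr // in zeC; apply: le_lt_trans zeC.
by rewrite /C mulrDr mulr1 (mulrC z) lerDl ltW.
Unshelve. all: by end_near.
Qed.

End HolderAlongFilter.

Lemma within01_cvg_at_right [f : R -> R] [x0 : R] : {within `[0, 1], continuous f} ->
  0 <= x0 < 1 -> f @ x0^'+ --> f x0.
Proof.
move=> /(continuous_within_itvP _ ltr01) [f_in f_0 _] /andP[].
rewrite le_eqVlt => /orP[/eqP <-|x00 x01] //.
by apply: cvg_at_right_filter; apply: f_in; rewrite in_itv /= x00 x01.
Qed.

Lemma within01_cvg_at_left [f : R -> R] [x0 : R] : {within `[0, 1], continuous f} ->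
  0 < x0 <= 1 -> f @ x0^'- --> f x0.
Proof.
move=> /(continuous_within_itvP _ ltr01) [f_in _ f_1] /andP[x00].
rewrite le_eqVlt => /orP[/eqP ->|x01] //.
by apply: cvg_at_left_filter; apply: f_in; rewrite in_itv /= x00 x01.
Qed.

Lemma near_at_right_dist x0 (e : R) : 0 < e -> \forall y \near x0^'+, 0 < `|y - x0| < e.
Proof.
move=> e0; near=> y.
have x0y : x0 < y by near: y; exact: nbhs_right_gt.
have ye : y - x0 < e by near: y; exact: nbhs_right_ltDr.
by rewrite gtr0_norm ?subr_gt0 ?x0y ?ye.
Unshelve. all: by end_near.
Qed.

Lemma near_at_left_dist x0 (e : R) : 0 < e -> \forall y \near x0^'-, 0 < `|y - x0| < e.
Proof.
move=> e0; near=> y.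
have yx0 : y < x0 by near: y; exact: nbhs_left_lt.
have ye : x0 - y < e by near: y; exact: nbhs_left_ltBl.
by rewrite distrC gtr0_norm ?subr_gt0 ?yx0 ?ye.
Unshelve. all: by end_near.
Qed.

Lemma completely_non_holder_comp (f G : R -> R) : {within `[0, 1], continuous f} ->
  (forall x0, x0 \in `[0, 1] -> finite_order_at G (f x0)) ->
  completely_non_holder f -> completely_non_holder (G \o f).
Proof.
move=> fc G_fo cnh x0 alpha x0I a0.
have [k [d [m [M [k0 d0 m0 bnd]]]]] := G_fo x0 x0I.
have lower t : `|t - f x0| < d -> m * `|t - f x0| ^+ k <= `|G t - G (f x0)|.
  by move=> /bnd /andP[].
have ak : 0 < alpha / k%:R by rewrite divr_gt0 ?ltr0n.
have [nr nl] := cnh x0 (alpha / k%:R) x0I ak.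
split=> -[x0_side hold]; [apply: nr | apply: nl]; split=> //.
  exact: holder_along_comp k0 d0 m0 lower (within01_cvg_at_right fc x0_side)
    (nbhs_right_neq x0) hold.
exact: holder_along_comp k0 d0 m0 lower (within01_cvg_at_left fc x0_side)
  (nbhs_left_neq x0) hold.
Qed.

Lemma completely_non_holder_deriv0 (h : R -> R) x0 :
  completely_non_holder h -> x0 \in `[0, 1] ->
  ~ right_deriv_zero h x0 /\ ~ left_deriv_zero h x0.
Proof.
move=> cnh x0I; have [nr nl] := cnh x0 1 x0I ltr01.
split=> -[x0_side slope0]; [apply: nr | apply: nl]; split=> //.
  exact: deriv0_holder_along (nbhs_right_neq x0) slope0.
exact: deriv0_holder_along (nbhs_left_neq x0) slope0.
Qed.

Lemma holder_poly_deriv0 (f : R -> R) x0 [alpha : R] : 0 < alpha ->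
  exists2 P : {poly R}, (1 < size P)%N &
    (holder_right f x0 alpha -> right_deriv_zero (fun x => P.[f x]) x0) /\
    (holder_left f x0 alpha -> left_deriv_zero (fun x => P.[f x]) x0).
Proof.
move=> a0; pose n := (Num.truncn (2 / alpha)).+1.
have n_alpha : 2 <= n%:R * alpha.
  by have := truncnS_gt (2 / alpha); rewrite -/n ltr_pdivrMr // => /ltW.
exists (('X - (f x0)%:P) ^+ n); first by rewrite size_exp_XsubC.
set P := ('X - (f x0)%:P) ^+ n.
have slope_eq : (fun y => (P.[f y] - P.[f x0]) / (y - x0))
    = (fun y => (f y - f x0) ^+ n / (y - x0)).
  by apply: funext => y; rewrite !horner_exp !hornerXsubC subrr expr0n /= subr0.
split=> -[x0_side hold]; split=> //; rewrite slope_eq.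
  exact: holder_along_pow_deriv0 a0 n_alpha (near_at_right_dist x0) hold.
exact: holder_along_pow_deriv0 a0 n_alpha (near_at_left_dist x0) hold.
Qed.

Lemma analytic_at_id (x : R) : analytic_at id x.
Proof.
exists 1, (fun k => if k == 0%N then x else if k == 1%N then 1 else 0).
split=> // y _; apply: cvg_near_cst; exists 2%N => // n n2.
rewrite /= big_ltn 1?ltnW // big_ltn // big_nat_cond big1 ?addr0.
  by rewrite expr0 expr1 mulr1 mul1r addrC subrK.
by move=> [|[|i]] // /andP[/andP[]]; rewrite mul0r.
Qed.

End CompletelyNonHolder.

Theorem mainTheorem1 (R : realType) (f : R -> R) :
  {within `[0, 1], continuous f} ->
  (completely_non_holder f <->
     (forall p : {poly R}, (1 < size p)%N ->
        forall x0 : R, x0 \in `[0, 1] ->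
          ~ right_deriv_zero (fun x => p.[f x]) x0 /\
          ~ left_deriv_zero (fun x => p.[f x]) x0))
  /\
  (completely_non_holder f <->
     (forall (F : R -> R) (a b : \bar R),
        (forall x, x \in `[0, 1] -> in_open_interval a b (f x)) ->
        (forall x, in_open_interval a b x -> analytic_at F x) ->
        (exists x y, in_open_interval a b x /\ in_open_interval a b y /\ F x != F y) ->
        completely_non_holder (F \o f))).
Proof.
move=> fc; split; split.
- move=> cnh P sP x0 x0I; apply: completely_non_holder_deriv0 x0I.
  by apply: completely_non_holder_comp => // x _; exact: poly_finite_order.
- move=> no_deriv0 x0 alpha x0I a0.
  have [P sP [deriv_r deriv_l]] := holder_poly_deriv0 f x0 a0.
  have [nr nl] := no_deriv0 P sP x0 x0I.
  by split=> [/deriv_r | /deriv_l].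
- move=> cnh F a b f_in F_an F_nonconst.
  apply: completely_non_holder_comp => // x xI.
  exact: analytic_nonconst_finite_order F_an F_nonconst (f_in x xI).
- have R_itv (x : R) : in_open_interval -oo%E +oo%E x by split; [exact: ltNyr | exact: ltry].
  move=> /(_ id -oo%E +oo%E (fun x _ => R_itv (f x)) (fun x _ => analytic_at_id x)).
  apply; exists 0, 1; split; [exact: R_itv | split; [exact: R_itv |]].
  by rewrite /= eq_sym oner_eq0.
Qed.
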